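(* Let $k$ be a positive integer and $n_0,\ldots,n_{k-1}$ positive integers, with indices read modulo $k$. For each $j\in\{0,\ldots,k-1\}$ let $A^{(j)}$ be a real $n_j\times n_{j+1}$ matrix, and suppose the signed digraph $G_{A^{(0)}A^{(1)}\cdots A^{(k-1)}}$ is e-cycle-free. Then every matrix in $\mathcal{Q}(A^{(0)})\mathcal{Q}(A^{(1)})\cdots\mathcal{Q}(A^{(k-1)})$ is a $P_0$-matrix.
   Context: Indices $j$ are taken modulo $k$. For a real matrix $M$, $\mathcal{Q}(M)$ is the set of real matrices $X$ of the same dimensions with $M_{ij}>0\Rightarrow X_{ij}>0$, $M_{ij}<0\Rightarrow X_{ij}<0$, $M_{ij}=0\Rightarrow X_{ij}=0$, and $\mathcal{Q}(A^{(0)})\cdots\mathcal{Q}(A^{(k-1)})=\{B^{(0)}\cdots B^{(k-1)} : B^{(j)}\in\mathcal{Q}(A^{(j)})\}$. The signed digraph $G=G_{A^{(0)}\cdots A^{(k-1)}}$ has vertex set the disjoint union of $V_0,\ldots,V_{k-1}$ with $V_j=\{V_j^1,\ldots,V_j^{n_j}\}$; there is a directed edge from $V_j^r$ to $V_{j+1}^s$ iff $(A^{(j)})_{rs}\neq 0$, with the sign of $(A^{(j)})_{rs}$; no other edges (loops allowed when $k=1$). Every directed cycle has length a multiple of $k$; a directed cycle with $kr_1$ edges, $r_2$ of them negative, is an e-cycle if $(-1)^{r_1+r_2}=1$ and an o-cycle otherwise; $G$ is e-cycle-free if it has no e-cycle. A $P_0$-matrix is a real square matrix all of whose principal minors are nonnegative.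 *)

From HB Require Import structures.
From mathcomp Require Import all_boot all_order all_algebra.
From mathcomp Require Export reals.
Set Implicit Arguments. Unset Strict Implicit. Unset Printing Implicit Defensive.
Import Order.TTheory GRing.Theory Num.Theory.
Local Open Scope ring_scope.

Definition idx (k : nat) (hk : (0 < k)%N) (i : nat) : 'I_k :=
  Ordinal (ltn_pmod i hk).

Definition nextl (k : nat) (hk : (0 < k)%N) (j : 'I_k) : 'I_k := idx hk j.+1.

Lemma idxS (k : nat) (hk : (0 < k)%N) (m : nat) :
  nextl hk (idx hk m) = idx hk m.+1.
Proof. by apply: val_inj => /=; rewrite -addn1 modnDml addn1. Qed.

Lemma idxk (k : nat) (hk : (0 < k)%N) : idx hk k = idx hk 0.
Proof. by apply: val_inj => /=; rewrite modnn mod0n. Qed.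

Section Defs.
Variables (R : realType) (k : nat) (hk : (0 < k)%N) (n : 'I_k -> nat).

Definition inQ (p q : nat) (M X : 'M[R]_(p, q)) : Prop :=
  forall i j, (0 < M i j -> 0 < X i j) /\ (M i j < 0 -> X i j < 0)
              /\ (M i j = 0 -> X i j = 0).

Fixpoint chain (B : forall j : 'I_k, 'M[R]_(n j, n (nextl hk j))) (m : nat)
  : 'M[R]_(n (idx hk 0), n (idx hk m)) :=
  match m with
  | 0 => 1%:M
  | m'.+1 => chain B m' *m castmx (erefl, congr1 n (idxS hk m')) (B (idx hk m'))
  end.

Definition prodmx (B : forall j : 'I_k, 'M[R]_(n j, n (nextl hk j)))
  : 'M[R]_(n (idx hk 0)) :=
  castmx (erefl, congr1 n (idxk hk)) (chain B k).

Definition principal_submx (m : nat) (M : 'M[R]_m) (S : {set 'I_m})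
  : 'M[R]_#|S| := mxsub (@enum_val _ (mem S)) (@enum_val _ (mem S)) M.

Definition P0 (m : nat) (M : 'M[R]_m) : Prop :=
  forall S : {set 'I_m}, 0 <= \det (principal_submx M S).

Definition vertex := {j : 'I_k & 'I_(n j)}.

Definition entry (A : forall j : 'I_k, 'M[R]_(n j, n (nextl hk j)))
  (j : 'I_k) (r s : nat) : R :=
  match @insub _ (fun x => x < n j)%N _ r, @insub _ (fun x => x < n (nextl hk j))%N _ s with
  | Some r', Some s' => A j r' s'
  | _, _ => 0
  end.

Definition weight (A : forall j : 'I_k, 'M[R]_(n j, n (nextl hk j)))
  (u v : vertex) : R :=
  if tag v == nextl hk (tag u) then entry A (tag u) (val (tagged u)) (val (tagged v))
  else 0.

Definition arc A (u v : vertex) : bool := weight A u v != 0.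

Definition dicycle A (c : seq vertex) : bool :=
  [&& c != [::], uniq c & cycle (arc A) c].

Definition cycle_arcs (c : seq vertex) : seq (vertex * vertex) := zip c (rot 1 c).

Definition neg_arcs A (c : seq vertex) : nat :=
  count (fun e => weight A e.1 e.2 < 0) (cycle_arcs c).

(* e-cycle: length k*r1 with r2 negative edges and (-1)^(r1+r2) = 1 *)
Definition e_cycle A (c : seq vertex) : Prop :=
  dicycle A c /\ ((-1 : R) ^+ (size c %/ k + neg_arcs A c) = 1).

Definition e_cycle_free A : Prop := forall c, ~ e_cycle A c.

End Defs.

From Pilot Require Import Defs.
From HB Require Import structures.
From mathcomp Require Import all_boot all_order all_algebra perm.
From mathcomp Require Import reals.
From mathcomp Require Import zify.
Import Order.TTheory GRing.Theory Num.Theory.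
Set Implicit Arguments. Unset Strict Implicit. Unset Printing Implicit Defensive.
Local Open Scope ring_scope.

(* Fix S inside V_0 and linearize the principal minor of B^(0)...B^(k-1) on S:
   on the vertices of G, take the matrix whose rows outside S are those of the
   identity plus the arcs of G (re-signed), and whose rows in S carry B^(0).
   Eliminating the layers 1, ..., k-1 one at a time by unitriangular row
   operations pushes the product into the rows of S and leaves a block
   triangular matrix with a unitriangular corner, so both determinants agree.
   In the Leibniz expansion of the linearized matrix, a nonzero term factors
   over the cycles of its permutation: each is a fixed point outside S,
   contributing 1, or a directed cycle of G with k r1 arcs, r2 of them
   negative (B has the sign pattern of A), which passes r1 times through
   V_(k-1) and so contributes with sign (-1)^(1 + r1 + r2).  As G has no
   e-cycle, r1 + r2 is odd and every term is nonnegative. *)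

Lemma count_mod_iota k j b : (j < k)%N ->
  count (fun i => i %% k == j)%N (iota b k) = 1%N.
Proof.
move=> jk; elim: b => [|b IH].
  rewrite (eq_in_count (a2 := pred1 j)); last first.
    by move=> i; rewrite mem_iota add0n => /andP [_ /modn_small ->].
  by rewrite count_uniq_mem ?iota_uniq // mem_iota jk.
have E : rcons (iota b k) (b + k)%N = b :: iota b.+1 k.
  by rewrite -cats1 -[RHS]/(iota b k.+1) -addn1 iotaD.
move: (congr1 (count (fun i => i %% k == j)%N) E).
by rewrite -cats1 count_cat IH /= addn0 modnDr; lia.
Qed.

Lemma count_mod_iota_mul k j q b : (j < k)%N ->
  count (fun i => i %% k == j)%N (iota b (q * k)) = q.
Proof.
move=> jk; elim: q b => [|q IH] b //.
by rewrite mulSn iotaD count_cat count_mod_iota // IH.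
Qed.

Lemma map_traject (T : Type) (f : T -> T) x L :
  map f (traject f x L) = traject f (f x) L.
Proof. by elim: L x => //= L IH x; rewrite IH. Qed.

Lemma rot1_traject (T : Type) (f : T -> T) x L :
  iter L f x = x -> rot 1 (traject f x L) = map f (traject f x L).
Proof.
case: L => // L H; rewrite map_traject [traject f x _]/= rot1_cons trajectSr.
by rewrite -iterSr H.
Qed.

Lemma fcycle_traject (T : eqType) (f : T -> T) x L :
  (0 < L)%N -> iter L f x = x -> fcycle f (traject f x L).
Proof.
case: L => // L _ H; rewrite /= rcons_path fpath_traject last_traject /=.
by rewrite -iterS H.
Qed.

Lemma traject_iota (T : Type) (f : T -> T) x L :
  traject f x L = [seq iter i f x | i <- iota 0 L].
Proof.
elim: L x => //= L IH x; rewrite IH -[in RHS](addn0 1%N) iotaDl -map_comp.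
by congr (_ :: _); apply: eq_map => i /=; rewrite -iterSr.
Qed.

Section Layers.
Variables (k : nat) (hk : (0 < k)%N).

Lemma iter_nextl (a : 'I_k) i : iter i (nextl hk) a = idx hk (a + i).
Proof.
elim: i => [|i IH] /=; first by apply: val_inj; rewrite /= addn0 modn_small.
by rewrite IH idxS addnS.
Qed.

Lemma count_fcycle_nextl (t : seq 'I_k) (j : 'I_k) : t != [::] ->
  fcycle (nextl hk) t -> count (pred1 j) t = (size t %/ k)%N.
Proof.
case: t => [//|a t'] _; rewrite [cycle _ _]/= rcons_path.
case/andP=> /fpathP [L ->]; rewrite last_traject => /eqP.
rewrite -iterS iter_nextl => Hl.
have -> : a :: traject (nextl hk) (nextl hk a) L = traject (nextl hk) a L.+1 by [].
have /dvdnP [q Hq] : (k %| L.+1)%N.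
  have : (a + L.+1 == a + 0 %[mod k])%N by rewrite [X in X == _](congr1 val Hl) addn0 modn_small.
  by rewrite eqn_modDl mod0n.
rewrite size_traject traject_iota count_map Hq mulnK //.
rewrite (eq_count (a2 := fun i => ((i + a) %% k)%N == j :> nat)); last first.
  by move=> i /=; rewrite iter_nextl /= addnC.
rewrite -(count_map (addn^~ a) (fun i => i %% k == j)%N).
have -> : [seq (i + a)%N | i <- iota 0 (q * k)] = iota a (q * k).
  by rewrite -[in RHS](addn0 a) iotaDl; apply: eq_map => i; rewrite addnC.
exact: count_mod_iota_mul.
Qed.

End Layers.

Lemma perm_moved (T : finType) (s : {perm T}) : s != 1%g -> exists i, s i != i.
Proof.
move=> Hs; apply/existsP; apply: contraR Hs; rewrite negb_exists => /forallP H.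
by apply/eqP/permP => i; rewrite perm1; apply/eqP; rewrite -[_ == _]negbK.
Qed.

Lemma porbit_fixed (T : finType) (s : {perm T}) x : s x = x -> porbit s x = [set x].
Proof.
move=> sx; apply/setP => y; rewrite inE; apply/idP/eqP => [/porbitP [i ->]|->].
  by elim: i => [|i IH]; rewrite ?expg0 ?perm1 // expgSr permM IH.
exact: porbit_id.
Qed.

Lemma sum_kronecker (R : pzSemiRingType) (T : finType) (i : T) (F : T -> R) :
  \sum_l (i == l)%:R * F l = F i.
Proof.
rewrite (bigD1 i) //= eqxx mul1r big1 ?addr0 // => l /negbTE Hl.
by rewrite eq_sym Hl mul0r.
Qed.

Lemma det_eq1_pattern (R : comPzRingType) N (M : 'M[R]_N) :
  (forall i, M i i = 1) ->
  (forall s : 'S_N, s != 1%g -> exists i, M i (s i) = 0) -> \det M = 1.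
Proof.
move=> Hd Hs; rewrite /determinant (bigD1 (1%g : 'S_N)) //= [X in _ + X]big1.
  by rewrite odd_perm1 expr0 mul1r addr0 big1 // => i _; rewrite perm1 Hd.
by move=> s /Hs [i Hi]; rewrite (bigD1 i) //= Hi mul0r mulr0.
Qed.

Section SignedProducts.
Variable R : realDomainType.

Lemma signr_sum (I : finType) (P : pred I) (f : I -> nat) :
  (-1) ^+ (\sum_(i | P i) f i)%N = \prod_(i | P i) ((-1) ^+ f i : R).
Proof. by apply: (big_morph (fun n => (-1) ^+ n)) => [x y|]; rewrite ?exprD. Qed.

(* Grouping the Leibniz expansion by cycles: (-1)^(N + #cycles) is the sign. *)
Lemma det_ge0_porbits N (M : 'M[R]_N) :
  (forall (s : 'S_N) x,
     0 <= (-1) ^+ (#|porbit s x|.+1) * \prod_(i in porbit s x) M i (s i)) ->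
  0 <= \det M.
Proof.
move=> H; apply: sumr_ge0 => s _; rewrite /odd_perm.
have E1 : \prod_i M i (s i) =
    \prod_(o in porbits s) \prod_(i | porbit s i == o) M i (s i).
  by rewrite (partition_big_imset (porbit s)).
have E2 : #|'I_N| = (\sum_(o in porbits s) \sum_(i | porbit s i == o) 1)%N.
  by rewrite -sum1_card (partition_big_imset (porbit s)).
have -> : (-1) ^+ (odd #|'I_N| (+) odd #|porbits s|) =
   (-1) ^+ (\sum_(o in porbits s) (\sum_(i | porbit s i == o) 1).+1)%N :> R.
  rewrite -[RHS]signr_odd (eq_bigr (fun o => (\sum_(i | porbit s i == o) 1) + 1)%N);
    last by move=> o _; rewrite addn1.
  by rewrite big_split /= -E2 sum1_card oddD.
rewrite signr_sum E1 -big_split /=; apply: prodr_ge0 => o /imsetP [x _ ->].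
have HP i : (porbit s i == porbit s x) = (i \in porbit s x) by rewrite eq_porbit_mem.
by rewrite (eq_bigl _ _ HP) sum1_card (eq_bigl _ _ HP); apply: H.
Qed.

Lemma prod_signr_count (I : Type) (s : seq I) (b : pred I) :
  \prod_(i <- s) (if b i then 1 else -1 : R) = (-1) ^+ (count (predC b) s).
Proof.
elim: s => [|x s IH]; first by rewrite big_nil.
by rewrite big_cons IH /=; case: (b x); rewrite /= ?mul1r // exprS.
Qed.

Lemma prod_signr_norm (I : Type) (s : seq I) (f : I -> R) :
  \prod_(i <- s) f i = (-1) ^+ (count (fun i => f i < 0) s) * \prod_(i <- s) `|f i|.
Proof.
elim: s => [|x s IH]; first by rewrite !big_nil mulr1.
rewrite !big_cons IH /= exprD {1}(numEsign (f x)).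
by rewrite !mulrA; congr (_ * _); rewrite -!mulrA; congr (_ * _); rewrite mulrC.
Qed.

End SignedProducts.

Section TotalEntry.
Variable R : nmodType.

(* Entry at natural-number indices, zero out of range; [entry A j] is
   [mxentry (A j)] by definition. *)
Definition mxentry p q (M : 'M[R]_(p, q)) (a b : nat) : R :=
  match @insub _ (fun x => x < p)%N _ a, @insub _ (fun x => x < q)%N _ b with
  | Some a', Some b' => M a' b' | _, _ => 0 end.

Lemma mxentry_val p q (M : 'M[R]_(p, q)) (a : 'I_p) (b : 'I_q) a' b' :
  a' = val a -> b' = val b -> mxentry M a' b' = M a b.
Proof. by move=> -> ->; rewrite /mxentry !valK. Qed.

Lemma mxentry_out p q (M : 'M[R]_(p, q)) a b :
  ~~ ((a < p) && (b < q))%N -> mxentry M a b = 0.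
Proof.
rewrite /mxentry negb_and => /orP [H|H]; first by rewrite insubF // (negbTE H).
by case: insubP => [? _ _|//]; rewrite insubF // (negbTE H).
Qed.

End TotalEntry.

Lemma mxentry_inQ (R : realType) p q (M X : 'M[R]_(p, q)) : inQ M X -> forall a b,
  [/\ 0 < mxentry M a b -> 0 < mxentry X a b,
      mxentry M a b < 0 -> mxentry X a b < 0 &
      mxentry M a b = 0 -> mxentry X a b = 0].
Proof.
move=> H a b; rewrite /mxentry.
case: (@insub _ (fun x => x < p)%N _ a) => [a'|]; last by rewrite ltxx.
case: (@insub _ (fun x => x < q)%N _ b) => [b'|]; last by rewrite ltxx.
by have [? [? ?]] := H a' b'.
Qed.

Section Linearization.
Variables (R : realType) (k : nat) (hk : (0 < k)%N) (n : 'I_k -> nat).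
Variable B : forall j : 'I_k, 'M[R]_(n j, n (nextl hk j)).
Variable S : {set 'I_(n (idx hk 0))}.

Notation V := (vertex n).
Notation tagv := (Tagged (fun j => 'I_(n j))).

Definition vval (u : V) : nat := val (tagged u).

Definition Sv : {set V} := [set tagv x | x in S].

Lemma tagv_inj (j : 'I_k) : injective (@Tagged _ j (fun j => 'I_(n j))).
Proof. by move=> r r'; apply: eq_from_Tagged. Qed.

Lemma mem_Sv (x : 'I_(n (idx hk 0))) : (tagv x \in Sv) = (x \in S).
Proof. exact/mem_imset/tagv_inj. Qed.

Lemma tag_Sv u : u \in Sv -> tag u = idx hk 0.
Proof. by case/imsetP=> x _ ->. Qed.

Lemma val_idx m : (m < k)%N -> val (idx hk m) = m.
Proof. by move=> mk; rewrite /= modn_small. Qed.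

Lemma val_nextl (j : 'I_k) : nat_of_ord (nextl hk j) = (if j.+1 == k then 0 else j.+1)%N.
Proof.
rewrite /=; case: eqP => [->|H]; first by rewrite modnn.
by rewrite modn_small // ltn_neqAle; apply/andP; split; [apply/eqP|exact: ltn_ord].
Qed.

Notation N := (#|S| + #|~: Sv|)%N.

Definition vert (i : 'I_N) : V :=
  match split i with
  | inl a => tagv (@enum_val _ (mem S) a)
  | inr b => @enum_val _ (mem (~: Sv)) b
  end.

Lemma vert_lshift (a : 'I_#|S|) :
  vert (lshift #|~: Sv| a) = tagv (@enum_val _ (mem S) a).
Proof. by rewrite /vert (unsplitK (inl _ a)). Qed.

Lemma vert_rshift (b : 'I_#|~: Sv|) :
  vert (rshift #|S| b) = @enum_val _ (mem (~: Sv)) b.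
Proof. by rewrite /vert (unsplitK (inr _ b)). Qed.

Lemma enum_val_notin_Sv (b : 'I_#|~: Sv|) : (@enum_val _ (mem (~: Sv)) b \in Sv) = false.
Proof. by have := enum_valP b; rewrite inE => /negbTE. Qed.

Lemma vert_inj : injective vert.
Proof.
move=> i j; rewrite -(splitK i) -(splitK j).
case: (split i) => [a|b]; case: (split j) => [a'|b'] /=;
  rewrite ?vert_lshift ?vert_rshift.
- by move=> E; rewrite (enum_val_inj (eq_from_Tagged E)).
- by move=> E; have := enum_val_notin_Sv b'; rewrite -E mem_Sv enum_valP.
- by move=> E; have := enum_val_notin_Sv b; rewrite E mem_Sv enum_valP.
- by move=> E; rewrite (enum_val_inj E).
Qed.

Lemma vert_bij : bijective vert.
Proof.
apply: inj_card_bij; first exact: vert_inj.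
rewrite card_ord -(cardsC Sv) leq_add2r.
by rewrite card_imset //; apply: tagv_inj.
Qed.

Lemma sum_vert (F : V -> R) (P : pred V) :
  \sum_(u | P u) F u = \sum_(i | P (vert i)) F (vert i).
Proof.
by apply: reindex; case: vert_bij => g H1 H2; exists g => x _; [exact: H1|exact: H2].
Qed.

Lemma sum_layer (J : 'I_k) (F : V -> R) :
  \sum_(u | tag u == J) F u = \sum_(r : 'I_(n J)) F (tagv r).
Proof.
rewrite -(big_pred1_eq +%R J (fun i => \sum_(r : 'I_(n i)) F (tagv r))).
rewrite sig_big_dep.
by apply: eq_big => [u|u _]; rewrite ?andbT ?taggedK.
Qed.

Lemma mxentry_chainS m a b :
  mxentry (chain B m.+1) a b =
  \sum_(r : 'I_(n (idx hk m))) mxentry (chain B m) a r * mxentry (B (idx hk m)) r b.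
Proof.
have [/andP [ha hb]|] := boolP ((a < n (idx hk 0)) && (b < n (idx hk m.+1)))%N.
  rewrite (@mxentry_val _ _ _ _ (Ordinal ha) (Ordinal hb)) //= !mxE.
  apply: eq_bigr => r _; rewrite castmxE /= cast_ord_id.
  rewrite (@mxentry_val _ _ _ _ (Ordinal ha) r) //.
  by rewrite (@mxentry_val _ _ _ _ r (cast_ord (esym (congr1 n (idxS hk m))) (Ordinal hb))).
move=> hab; rewrite mxentry_out //; move: hab; rewrite negb_and => /orP [ha|hb].
  by rewrite big1 // => r _; rewrite mxentry_out ?mul0r // (negbTE ha).
rewrite big1 // => r _; rewrite [mxentry (B _) _ _]mxentry_out ?mulr0 //.
by rewrite -idxS in hb; rewrite (negbTE hb) andbF.
Qed.

Lemma mxentry_chain1 a b : mxentry (chain B 1) a b = mxentry (B (idx hk 0)) a b.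
Proof.
rewrite mxentry_chainS; have [ha|ha] := boolP (a < n (idx hk 0))%N; last first.
  rewrite big1 => [|r _]; last by rewrite mxentry_out ?mul0r // (negbTE ha).
  by rewrite mxentry_out // (negbTE ha).
rewrite (bigD1 (Ordinal ha)) //= big1 ?addr0 => [|r /negbTE hr].
  by rewrite (@mxentry_val _ _ _ _ (Ordinal ha) (Ordinal ha)) // mxE eqxx mul1r.
by rewrite (@mxentry_val _ _ _ _ (Ordinal ha) r) // mxE eq_sym hr mul0r.
Qed.

Definition layer_sign (u : V) : R := if tag u == k.-1 :> nat then 1 else -1.

Definition lin_arc (u w : V) : R :=
  if tag w == nextl hk (tag u) then
    if tag u == k.-1 :> nat then (if w \in Sv then mxentry (B (tag u)) (vval u) (vval w) else 0)
    else - mxentry (B (tag u)) (vval u) (vval w)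
  else 0.

Lemma lin_arc_weight u w :
  lin_arc u w = 0 \/ lin_arc u w = layer_sign u * weight B u w.
Proof.
rewrite /lin_arc /layer_sign /weight; case: ifP => _; last by left.
by case: ifP => _; [case: ifP => _; [right; rewrite mul1r|left] | right; rewrite mulN1r].
Qed.

Lemma lin_arc_diag u : u \notin Sv -> lin_arc u u = 0.
Proof.
move=> /negbTE uS; rewrite /lin_arc uS; case: eqP => // /(congr1 (@nat_of_ord k)).
rewrite val_nextl; have [uk _|_] := eqVneq (tag u).+1 k; last lia.
by rewrite (_ : tag u == k.-1 :> nat) //; apply/eqP; lia.
Qed.

Lemma lin_arc_succ u w : w \notin Sv -> lin_arc u w != 0 -> tag w = (tag u).+1 :> nat.
Proof.
move=> /negbTE wS; rewrite /lin_arc wS.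
have [wu|_] := eqVneq (tag w) (nextl hk (tag u)); last by rewrite eqxx.
rewrite (congr1 (@nat_of_ord k) wu) val_nextl.
have [_|/eqP uk] := eqVneq (tag u : nat) k.-1; first by rewrite eqxx.
by rewrite ifF //; apply/eqP; have := ltn_ord (tag u); lia.
Qed.

(* [stagemx m] is the linearization after m - 1 elimination steps: the rows
   of [S] carry minus B^(0)...B^(m-1), placed on layer m (at [m = k], the
   product itself, restricted to [S]); the other rows are those of the
   identity plus [lin_arc]. *)
Definition stage_entry (m : nat) (u w : V) : R :=
  if u \in Sv then
    if (m < k)%N then (if tag w == idx hk m then - mxentry (chain B m) (vval u) (vval w) else 0)
    else if w \in Sv then mxentry (chain B m) (vval u) (vval w) else 0
  else (u == w)%:R + lin_arc u w.

Definition stagemx m : 'M[R]_N := \matrix_(i, j) stage_entry m (vert i) (vert j).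

Lemma stage_entry_notin_Sv m u w :
  u \notin Sv -> stage_entry m u w = (u == w)%:R + lin_arc u w.
Proof. by move=> /negbTE uS; rewrite /stage_entry uS. Qed.

Lemma sum_delta (J : 'I_k) (F : 'I_(n J) -> R) (G : nat -> R) (w : V) :
  (forall r : 'I_(n J), F r = G r) ->
  \sum_(r : 'I_(n J)) F r * (tagv r == w)%:R = if tag w == J then G (vval w) else 0.
Proof.
move=> FG; case: w => j r' /=; case: eqP => [Ej|Nj].
  subst j; rewrite (bigD1 r') //= eqxx mulr1 big1 ?addr0 ?FG // => r /negbTE Hr.
  by rewrite (inj_eq (@tagv_inj _)) Hr mulr0.
apply: big1 => r _; case: eqP => [E|]; last by rewrite mulr0.
by case: Nj; move: (congr1 tag E).
Qed.

Section Elimination.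
Variable m : nat.
Hypotheses (m_gt0 : (0 < m)%N) (m_lt : (m < k)%N).
Let J := idx hk m.

Lemma J_notin_Sv u : tag u = J -> u \notin Sv.
Proof.
move=> uJ; apply/negP => /tag_Sv; rewrite uJ => /(congr1 val).
by rewrite val_idx //= mod0n; lia.
Qed.

Lemma sum_lin_arc (a : nat) (w : V) :
  \sum_(r : 'I_(n J)) mxentry (chain B m) a (vval (tagv r)) * lin_arc (tagv r) w =
  if (m.+1 < k)%N then (if tag w == idx hk m.+1 then - mxentry (chain B m.+1) a (vval w) else 0)
  else if w \in Sv then mxentry (chain B m.+1) a (vval w) else 0.
Proof.
rewrite mxentry_chainS /lin_arc /= modn_small //.
have -> : (tag w == nextl hk J) = (tag w == idx hk m.+1) by rewrite /J idxS.
case Hw: (tag w == idx hk m.+1); last first.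
  rewrite big1 => [|r _]; last by rewrite mulr0.
  case: ifP => // Hm; case Hs: (w \in Sv) => //; exfalso.
  move: Hw; rewrite (tag_Sv Hs) (_ : idx hk 0 = idx hk m.+1) ?eqxx //.
  by apply: val_inj; rewrite /= mod0n (_ : m.+1 = k) ?modnn //; lia.
case: ifP => Hm.
  have -> : (m == k.-1) = false by apply/negbTE; lia.
  by rewrite -sumrN; apply: eq_bigr => r _; rewrite mulrN.
have -> : (m == k.-1) = true by apply/eqP; lia.
by case: (w \in Sv) => //; rewrite big1 // => r _; rewrite mulr0.
Qed.

Definition elimmx : 'M[R]_N := \matrix_(i, j) ((i == j)%:R +
  (if (vert i \in Sv) && (tag (vert j) == J)
   then mxentry (chain B m) (vval (vert i)) (vval (vert j)) else 0)).

Lemma det_elimmx : \det elimmx = 1.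
Proof.
have SJ u : u \in Sv -> tag u == J = false.
  by move=> uS; apply/negbTE/eqP => /J_notin_Sv; rewrite uS.
apply: det_eq1_pattern => [i|s /perm_moved [i Hi]].
  by rewrite mxE eqxx; case: ifP => [/andP [/SJ -> //]|]; rewrite addr0.
have [E0|] := eqVneq (elimmx i (s i)) 0; first by exists i.
rewrite mxE (eq_sym i) (negbTE Hi) add0r; case: ifP => [/andP [_ Ht] _|]; last by rewrite eqxx.
exists (s i); rewrite mxE; case: eqP => [E|_]; first by rewrite -(perm_inj E) eqxx in Hi.
by case: ifP => [/andP [/SJ]|]; rewrite ?addr0 // Ht.
Qed.

Lemma stagemxS : stagemx m.+1 = elimmx *m stagemx m.
Proof.
apply/matrixP => i j; rewrite !mxE.
under eq_bigr do rewrite !mxE mulrDl.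
rewrite big_split /= sum_kronecker.
have [iS|iS] := boolP (vert i \in Sv); last first.
  by rewrite big1 ?addr0 /stage_entry ?(negbTE iS) // => l _; rewrite mul0r.
under eq_bigr do rewrite andTb (fun_if (fun x => x * _)) mul0r.
rewrite -big_mkcond /= -(sum_vert (fun u => mxentry (chain B m) (vval (vert i)) (vval u) *
  stage_entry m u (vert j)) (fun u => tag u == J)) sum_layer.
under eq_bigr do rewrite stage_entry_notin_Sv ?J_notin_Sv // mulrDr.
rewrite big_split /= (@sum_delta J _ (mxentry (chain B m) (vval (vert i)))) //.
rewrite /stage_entry iS m_lt sum_lin_arc addrA.
by rewrite /J; case: (tag (vert j) == idx hk m); rewrite ?addNr ?addr0 add0r.
Qed.

Lemma det_stagemxS : \det (stagemx m.+1) = \det (stagemx m).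
Proof. by rewrite stagemxS det_mulmx det_elimmx mul1r. Qed.

End Elimination.

Lemma ulsubmx_stagemx : ulsubmx (stagemx k) = principal_submx (prodmx B) S.
Proof.
apply/matrixP => a b; rewrite !mxE !vert_lshift /stage_entry !mem_Sv !enum_valP ltnn.
by rewrite /prodmx castmxE; apply: mxentry_val.
Qed.

Lemma ursubmx_stagemx : ursubmx (stagemx k) = 0.
Proof.
apply/matrixP => a b.
by rewrite !mxE vert_lshift vert_rshift /stage_entry mem_Sv enum_valP ltnn enum_val_notin_Sv.
Qed.

(* Outside [S] the stage matrices are unitriangular for the order of the
   layers, because an arc of [lin_arc] between vertices outside [S] climbs
   by exactly one layer. *)
Lemma det_drsubmx_stagemx m : \det (drsubmx (stagemx m)) = 1.
Proof.
have E a b : drsubmx (stagemx m) a b =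
    (a == b)%:R + lin_arc (@enum_val _ (mem (~: Sv)) a) (@enum_val _ (mem (~: Sv)) b).
  by rewrite !mxE !vert_rshift stage_entry_notin_Sv ?enum_val_notin_Sv // (inj_eq enum_val_inj).
apply: det_eq1_pattern => [a|s /perm_moved [a0 Ha0]].
  by rewrite E eqxx lin_arc_diag ?enum_val_notin_Sv ?addr0.
case: (@arg_maxnP _ a0 (fun a => s a != a)
  (fun a => nat_of_ord (tag (@enum_val _ (mem (~: Sv)) a))) Ha0) => a Ha Hmax.
exists a; rewrite E eq_sym (negbTE Ha) add0r; apply: contraTeq isT => Hnz.
have Hsa : s (s a) != s a by apply: contra Ha => /eqP /perm_inj ->.
by have := Hmax _ Hsa; rewrite (lin_arc_succ _ Hnz) ?enum_val_notin_Sv //= ltnn.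
Qed.

Lemma det_stagemx_k : \det (stagemx k) = \det (principal_submx (prodmx B) S).
Proof.
by rewrite -[stagemx k]submxK ursubmx_stagemx det_lblock det_drsubmx_stagemx
  ulsubmx_stagemx mulr1.
Qed.

Lemma det_stagemx_indep m : (0 < m)%N -> (m <= k)%N -> \det (stagemx m) = \det (stagemx 1).
Proof.
elim: m => // m IH _ Hm; case: (posnP m) => [->//|m0].
by rewrite det_stagemxS // IH // ltnW.
Qed.

Lemma det_stagemx1 : \det (stagemx 1) = \det (principal_submx (prodmx B) S).
Proof. by rewrite -(det_stagemx_indep hk (leqnn k)) det_stagemx_k. Qed.

Lemma stage_entry1 u w : (u \in Sv) || (u != w) ->
  stage_entry 1 u w = 0 \/ stage_entry 1 u w = layer_sign u * weight B u w.
Proof.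
have [/imsetP [x xS ->] _|uS /= uw] := boolP (u \in Sv); last first.
  by rewrite stage_entry_notin_Sv // (negbTE uw) add0r; apply: lin_arc_weight.
rewrite /stage_entry mem_Sv xS mxentry_chain1 /layer_sign /weight /= mod0n.
have -> : (tag w == nextl hk (idx hk 0)) = (tag w == idx hk 1) by rewrite idxS.
case: ifP => [k_gt1|k_le1].
  rewrite (_ : (0 == k.-1)%N = false); last by apply/negbTE; lia.
  by right; rewrite mulN1r; case: ifP => _; rewrite ?oppr0.
rewrite (_ : (0 == k.-1)%N = true); last by apply/eqP; lia.
have -> : idx hk 1 = idx hk 0 by apply: val_inj; rewrite /= mod0n (_ : k = 1%N) //; lia.
case: ifP => [wS|_]; last by left.
by right; rewrite mul1r (_ : tag w == idx hk 0) //; apply/eqP/tag_Sv.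
Qed.

Section SignPattern.
Variable A : forall j : 'I_k, 'M[R]_(n j, n (nextl hk j)).
Hypotheses (hQ : forall j, inQ (A j) (B j)) (hE : e_cycle_free A).

Lemma weight_sign u w : weight B u w != 0 ->
  weight A u w != 0 /\ (weight B u w < 0) = (weight A u w < 0).
Proof.
have [h1 h2 h3] : [/\ 0 < weight A u w -> 0 < weight B u w,
    weight A u w < 0 -> weight B u w < 0 & weight A u w = 0 -> weight B u w = 0].
  by rewrite /weight; case: ifP => _; [apply: mxentry_inQ | rewrite ltxx].
case: (ltrgtP (weight A u w) 0) => H BH.
- by split => //; rewrite (h2 H).
- by split => //; rewrite (lt_gtF (h1 H)).
- by move: BH; rewrite h3 ?eqxx.
Qed.

Lemma arc_nextl u w : Defs.arc A u w -> nextl hk (tag u) == tag w.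
Proof. by rewrite /Defs.arc /weight; case: ifP => [H _|_]; rewrite ?eqxx // eq_sym. Qed.

Section Orbit.
Variables (s : 'S_N) (x : 'I_N).
Let L := #|porbit s x|.
Let c := traject s x L.
Hypothesis arc_c : forall y, y \in c -> weight B (vert y) (vert (s y)) != 0.

Lemma orbit_arcs :
  zip (map vert c) (rot 1 (map vert c)) = [seq (vert y, vert (s y)) | y <- c].
Proof. by rewrite -map_rot rot1_traject ?iter_porbit // -map_comp zip_map. Qed.

Lemma dicycle_orbit : dicycle A (map vert c).
Proof.
apply/and3P; split.
- by rewrite -size_eq0 size_map size_traject card_porbit_neq0.
- by rewrite map_inj_uniq ?uniq_traject_porbit //; apply: vert_inj.
rewrite cycle_map; apply: (sub_in_cycle (P := mem c) (e := frel s)).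
- by move=> y z Hy _ /eqP <-; rewrite /relpre /=; case: (weight_sign (arc_c Hy)).
- exact/allP.
- by apply: fcycle_traject; rewrite ?iter_porbit // lt0n card_porbit_neq0.
Qed.

Lemma neg_arcs_orbit :
  neg_arcs A (map vert c) = count (fun y => weight B (vert y) (vert (s y)) < 0) c.
Proof.
rewrite /neg_arcs /cycle_arcs orbit_arcs count_map; apply: eq_in_count => y Hy /=.
by case: (weight_sign (arc_c Hy)).
Qed.

Lemma count_last_layer_orbit :
  count (fun y => tag (vert y) == k.-1 :> nat) c = (L %/ k)%N.
Proof.
have /and3P [c_nil _ c_cyc] := dicycle_orbit.
have kk : (k.-1 < k)%N by rewrite prednK.
have -> : L = size (map tag (map vert c)) by rewrite !size_map size_traject.
rewrite -(@count_fcycle_nextl _ hk _ (Ordinal kk)).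
- by rewrite !count_map.
- by rewrite -size_eq0 size_map size_eq0.
- by rewrite cycle_map; apply: sub_cycle c_cyc => u w; apply: arc_nextl.
Qed.

Lemma orbit_sign_ge0 :
  (forall y, y \in c -> stagemx 1 y (s y) = layer_sign (vert y) * weight B (vert y) (vert (s y))) ->
  0 <= (-1) ^+ L.+1 * \prod_(y <- c) stagemx 1 y (s y).
Proof.
move=> Ec; rewrite (eq_big_seq _ Ec) big_split /= /layer_sign prod_signr_count.
rewrite prod_signr_norm -neg_arcs_orbit.
have odd_e : odd (L %/ k + neg_arcs A (map vert c)).
  apply/negPn/negP => Hev; apply: (hE (c := map vert c)); split; first exact: dicycle_orbit.
  by rewrite size_map size_traject -signr_odd (negbTE Hev) expr0.
have Lc : count (predC (fun y => tag (vert y) == k.-1 :> nat)) c = (L - L %/ k)%N.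
  have size_c : size c = L by rewrite size_traject.
  rewrite -count_last_layer_orbit -size_c -(count_predC (fun y => tag (vert y) == k.-1 :> nat) c).
  by rewrite addKn.
rewrite Lc !mulrA -!exprD -signr_odd.
have -> : (L.+1 + (L - L %/ k) + neg_arcs A (map vert c) =
   (L %/ k + neg_arcs A (map vert c)).+1 + 2 * (L - L %/ k))%N.
  by have := leq_div L k; lia.
rewrite oddD oddS odd_e oddM /= expr0 mul1r.
by apply: prodr_ge0 => y _; apply: normr_ge0.
Qed.

End Orbit.

Lemma porbit_term_ge0 (s : 'S_N) x :
  0 <= (-1) ^+ (#|porbit s x|).+1 * \prod_(i in porbit s x) stagemx 1 i (s i).
Proof.
have [/andP [/eqP sx xS]|not_fixed] := boolP ((s x == x) && (vert x \notin Sv)).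
  rewrite porbit_fixed // cards1 big_set1 sx mxE stage_entry_notin_Sv //.
  by rewrite eqxx lin_arc_diag // addr0 mulr1 expr2 mulN1r opprK ler01.
set c := traject s x #|porbit s x|.
have -> : \prod_(i in porbit s x) stagemx 1 i (s i) = \prod_(y <- c) stagemx 1 y (s y).
  by rewrite big_uniq ?uniq_traject_porbit //; apply: eq_bigl => i; apply: porbit_traject.
have [/hasP [y Hy /eqP y0]|/hasPn nz] := boolP (has (fun y => stagemx 1 y (s y) == 0) c).
  by rewrite (big_rem y) //= y0 mul0r mulr0.
have y_arc y : y \in c -> (vert y \in Sv) || (vert y != vert (s y)).
  move=> Hy; apply: contraR not_fixed.
  rewrite negb_or negbK (inj_eq vert_inj) => /andP [yS /eqP sy].
  have : x \in porbit s y by rewrite porbit_sym porbit_traject.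
  by rewrite porbit_fixed // inE => /eqP ->; rewrite -sy eqxx.
have Ec y : y \in c ->
    stagemx 1 y (s y) = layer_sign (vert y) * weight B (vert y) (vert (s y)).
  move=> Hy; have := nz y Hy; rewrite mxE.
  by case: (stage_entry1 (y_arc y Hy)) => ->; rewrite ?eqxx.
apply: orbit_sign_ge0 => // y Hy; apply: contraNneq (nz y Hy) => w0.
by rewrite Ec // w0 mulr0.
Qed.

Lemma det_stagemx1_ge0 : 0 <= \det (stagemx 1).
Proof. by apply: det_ge0_porbits => s x; apply: porbit_term_ge0. Qed.

End SignPattern.

End Linearization.

Theorem corollary4 (R : realType) (k : nat) (hk : (0 < k)%N) (n : 'I_k -> nat)
  (hn : forall j, (0 < n j)%N)
  (A : forall j : 'I_k, 'M[R]_(n j, n (nextl hk j))) :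
  e_cycle_free A ->
  forall B : forall j : 'I_k, 'M[R]_(n j, n (nextl hk j)),
    (forall j, inQ (A j) (B j)) ->
    P0 (prodmx B).
Proof.
move=> hE B hQ S; rewrite -det_stagemx1.
exact: det_stagemx1_ge0 hQ hE.
Qed.
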